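(* Let $G=(V,A)$ and $\mathfrak n=\mathfrak n(G)$ be as below. If $\omega=\sum_{e\in V,\alpha\in A}\lambda_{e,\alpha}\,e\wedge\alpha\in(W\wedge\mathfrak z)^{\mathfrak n}$, then $\lambda_{e,\alpha}=0$ for every $\alpha\in A$ and every vertex $e$ with $|e|\ge 2$.
   Context: $G=(V,A)$ is a finite simple graph without loops and without isolated vertices, with vertices $V=\{e_1,\dots,e_n\}$ ordered; each edge $\alpha$ joining $e_i,e_j$ with $i<j$ is oriented from $e_i$ to $e_j$. The graph algebra $\mathfrak n(G)$ over a field $k$ of characteristic zero has basis $V\cup A$ with $[e_i,e_j]=\alpha$ if $\alpha$ goes from $e_i$ to $e_j$, $[e_i,e_j]=0$ if $e_i,e_j$ are not adjacent, and all edges central; $\mathfrak z=\mathrm{span}(A)$ is its center and $W=\mathrm{span}(V)$. $|e|$ is the degree of $e$. Invariants are with respect to $\mathrm{ad}_x(a\wedge b)=[x,a]\wedge b+a\wedge[x,b]$. *)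

From HB Require Import structures.
From mathcomp Require Import all_boot all_order all_algebra.
Set Implicit Arguments. Unset Strict Implicit. Unset Printing Implicit Defensive.
Import Order.TTheory GRing.Theory Num.Theory.
Local Open Scope ring_scope.

Definition simple_graph (n : nat) (adj : rel 'I_n) : Prop :=
  (forall i, ~~ adj i i) /\ (forall i j, adj i j = adj j i).

Definition no_isolated (n : nat) (adj : rel 'I_n) : Prop :=
  forall i, exists j, adj i j.

Definition degree (n : nat) (adj : rel 'I_n) (i : 'I_n) : nat :=
  #|[set j | adj i j]|.

(* Edges: an edge joining e_i, e_j with i < j, oriented from e_i to e_j,
   is the pair (i, j). *)
Definition edgeT (n : nat) (adj : rel 'I_n) : finType :=
  {p : 'I_n * 'I_n | ((p.1 < p.2)%N && adj p.1 p.2)}.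

(* Basis V ∪ A of the graph algebra n(G). *)
Definition basisT (n : nat) (adj : rel 'I_n) : finType :=
  ('I_n + edgeT adj)%type.

Section GraphAlgebra.
Variables (K : fieldType) (n : nat) (adj : rel 'I_n).
Local Notation B := (basisT adj).

(* Vectors of n(G) are coordinate functions on the basis. *)
Definition delta (b : B) : B -> K := fun d => if d == b then 1 else 0.

(* Bracket of basis elements: [e_i,e_j] = alpha if alpha goes from e_i to e_j,
   [e_i, e_j] = -alpha if alpha goes from e_j to e_i, 0 otherwise;
   edges are central. *)
Definition brB (b c : B) : B -> K :=
  match b, c with
  | inl i, inl j => fun d =>
      match d with
      | inr a => if val a == (i, j) then 1
                 else if val a == (j, i) then -1 else 0
      | inl _ => 0
      end
  | _, _ => fun _ => 0
  end.

Definition lie (x y : B -> K) : B -> K :=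
  fun d => \sum_(b : B) \sum_(c : B) x b * y c * brB b c d.

(* Λ² n(G) is represented by alternating 2-tensors  B -> B -> K, with
   a ∧ b := a ⊗ b - b ⊗ a. *)
Definition wedge (u v : B -> K) : B -> B -> K :=
  fun b c => u b * v c - u c * v b.

(* ad_x (a ∧ b) = [x,a] ∧ b + a ∧ [x,b], extended linearly (via the
   derivation action ad_x ⊗ 1 + 1 ⊗ ad_x on tensors). *)
Definition ad2 (x : B -> K) (w : B -> B -> K) : B -> B -> K :=
  fun b c => \sum_(d : B) (w d c * lie x (delta d) b + w b d * lie x (delta d) c).

Definition omegaW (lam : 'I_n -> edgeT adj -> K) : B -> B -> K :=
  fun b c => \sum_(e : 'I_n) \sum_(a : edgeT adj)
               lam e a * wedge (delta (inl e)) (delta (inr a)) b c.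

Definition invariant2 (w : B -> B -> K) : Prop :=
  forall x : B -> K, ad2 x w = (fun _ _ => 0).

End GraphAlgebra.

From HB Require Import structures.
From mathcomp Require Import all_boot all_order all_algebra.
From mathcomp Require Import ring.
Set Implicit Arguments. Unset Strict Implicit. Unset Printing Implicit Defensive.
Import GRing.Theory.
Local Open Scope ring_scope.

(* Only the components of ad_f ω on z ∧ z matter.  For a vertex f and edges
   β, γ, the (β, γ) component of ad_f ω is ±λ(f', γ) ∓ λ(f'', β), where f'
   (resp. f'') is the other endpoint of β (resp. γ) when f is an endpoint,
   and the term is absent otherwise.  If a vertex e has a neighbour f that
   is not an endpoint of α, taking β = ef and γ = α kills everything but
   λ(e, α).  Otherwise, since |e| >= 2, e is adjacent to both endpoints u, v
   of α, and the three components (f, β, γ) = (u, eu, α), (v, ev, α),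
   (e, eu, ev) of the triangle euv combine to 2 λ(e, α) = 0. *)

Lemma sum_delta_mul (R : nzSemiRingType) (T : finType) (x : T) (F : T -> R) :
  \sum_y (if y == x then 1 else 0) * F y = F x.
Proof.
rewrite (bigD1 x) //= eqxx mul1r big1 ?addr0 // => y /negbTE ->.
by rewrite mul0r.
Qed.

Lemma sum_delta_mul_sym (R : nzSemiRingType) (T : finType) (x : T) (F : T -> R) :
  \sum_y (if x == y then 1 else 0) * F y = F x.
Proof. by under eq_bigr do rewrite eq_sym; rewrite sum_delta_mul. Qed.

Section EdgeIncidence.
Variables (K : fieldType) (n : nat) (adj : rel 'I_n).
Implicit Types (f i j : 'I_n) (b c : edgeT adj).

Definition endpoints b : {set 'I_n} := [set (val b).1; (val b).2].

Definition joins b i j : bool := (val b == (i, j)) || (val b == (j, i)).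

Definition edge_other f b : 'I_n := if (val b).1 == f then (val b).2 else (val b).1.

(* [f, edge_other f b] = edge_sign f b * b in n(G). *)
Definition edge_sign f b : K :=
  if (val b).1 == f then 1 else if (val b).2 == f then -1 else 0.

Lemma edge_ends_neq b : (val b).1 != (val b).2.
Proof. by case/andP: (valP b) => lt_b _; rewrite neq_ltn lt_b. Qed.

Lemma joinsC b i j : joins b i j = joins b j i.
Proof. exact: orbC. Qed.

Lemma joins_ends b : joins b (val b).1 (val b).2.
Proof. by rewrite /joins -surjective_pairing eqxx. Qed.

Lemma simple_graph_joins i j :
  simple_graph adj -> adj i j -> exists b, joins b i j.
Proof.
case=> irr sym ij; have i_neq_j : i != j by apply: contraTneq ij => ->.
case: (ltngtP i j) => [lt_ij | lt_ji | /val_inj eq_ij].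
- by exists (exist _ (i, j) (introT andP (conj lt_ij ij))); rewrite /joins eqxx.
- by exists (exist _ (j, i) (introT andP (conj lt_ji (etrans (sym j i) ij))));
    rewrite /joins eqxx orbT.
- by rewrite eq_ij eqxx in i_neq_j.
Qed.

Lemma joins_ind (P : 'I_n -> 'I_n -> 'I_n * 'I_n -> Prop) b i j :
  (forall p q, p != q -> P p q (p, q)) -> (forall p q, p != q -> P q p (p, q)) ->
  joins b i j -> P i j (val b).
Proof.
move=> Hpq Hqp /orP[] /eqP ebij; have := edge_ends_neq b; rewrite ebij /=.
  exact: Hpq.
exact: Hqp.
Qed.

Lemma edge_other_joins b i j : joins b i j -> edge_other i b = j.
Proof.
rewrite /edge_other.
apply: (@joins_ind (fun i j p => (if p.1 == i then p.2 else p.1) = j)).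
  by move=> p q _ /=; rewrite eqxx.
by move=> p q /negbTE /= ->.
Qed.

Lemma edge_sign_joinsC b i j : joins b i j -> edge_sign j b = - edge_sign i b.
Proof.
rewrite /edge_sign.
apply: (@joins_ind (fun i j p => (if p.1 == j then 1 else if p.2 == j then -1 else 0)
  = - (if p.1 == i then 1 else if p.2 == i then -1 else 0) :> K)) => p q pq /=.
  by rewrite ifN // !eqxx.
by rewrite !eqxx ifN ?opprK.
Qed.

Lemma edge_sign_joins_neq0 b i j : joins b i j -> edge_sign i b != 0.
Proof.
rewrite /edge_sign; apply: (@joins_ind (fun i j p =>
  (if p.1 == i then 1 else if p.2 == i then -1 else 0) != 0 :> K)) => p q pq /=.
  by rewrite eqxx oner_eq0.
by rewrite ifN // eqxx oppr_eq0 oner_eq0.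
Qed.

Lemma edge_sign_notin f b : f \notin endpoints b -> edge_sign f b = 0.
Proof. by rewrite /edge_sign !inE !(eq_sym f) => /norP[/negbTE -> /negbTE ->]. Qed.

Lemma brB_vertex_edge f j b :
  brB K (inl f) (inl j) (inr b) = edge_sign f b * (j == edge_other f b)%:R.
Proof.
rewrite /= /edge_sign /edge_other.
move: (edge_ends_neq b); case: b => [[p q] _] /= p_neq_q.
rewrite !xpair_eqE (eq_sym j).
case: (eqVneq p f) => [<- | _] /=.
  by rewrite mul1r [q == p]eq_sym (negbTE p_neq_q) andbF; case: (q == j).
case: (eqVneq q f) => _; last by rewrite andbF mul0r.
by rewrite andbT; case: (p == j); rewrite ?mulr1 ?mulr0.
Qed.

Lemma sum_brB_vertex_edge (g : 'I_n -> K) f b :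
  \sum_j g j * brB K (inl f) (inl j) (inr b) = edge_sign f b * g (edge_other f b).
Proof.
under eq_bigr do rewrite brB_vertex_edge mulrCA.
rewrite -mulr_sumr -(sum_delta_mul (edge_other f b) g); congr (_ * _).
by apply: eq_bigr => i _; rewrite mulrC; case: (i == _).
Qed.

End EdgeIncidence.

Arguments edge_sign {K n adj}.

Section InvariantComponents.
Variables (K : fieldType) (n : nat) (adj : rel 'I_n).
Variable lam : 'I_n -> edgeT adj -> K.

Lemma lie_delta_vertex f d (b : basisT adj) :
  lie (delta K (inl f)) (delta K d) b = brB K (inl f) d b.
Proof.
rewrite /lie /delta.
under eq_bigr do under eq_bigr do rewrite -mulrA.
by under eq_bigr do rewrite -mulr_sumr sum_delta_mul; rewrite sum_delta_mul.
Qed.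

Lemma omegaW_vertex_edge j c : omegaW lam (inl j) (inr c) = lam j c.
Proof.
rewrite /omegaW /wedge /delta /=.
under eq_bigr do under eq_bigr do rewrite mulr0 subr0 mulrC -mulrA.
by under eq_bigr do rewrite -mulr_sumr sum_delta_mul_sym; rewrite sum_delta_mul_sym.
Qed.

Lemma omegaW_edge_vertex j c : omegaW lam (inr c) (inl j) = - lam j c.
Proof.
rewrite /omegaW /wedge /delta /=.
under eq_bigr do under eq_bigr do
  rewrite mul0r sub0r mulrN mulrC [X in X * _]mulrC -mulrA.
by under eq_bigr do rewrite sumrN sum_delta_mul_sym; rewrite sumrN sum_delta_mul_sym.
Qed.

Lemma ad2_omegaW_edges f b c :
  ad2 (delta K (inl f)) (omegaW lam) (inr b) (inr c) =
  edge_sign f b * lam (edge_other f b) c - edge_sign f c * lam (edge_other f c) b.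
Proof.
rewrite /ad2; under eq_bigr do rewrite !lie_delta_vertex.
rewrite big_sumType [X in _ + X = _]big1 => [|a _]; last by rewrite /= !mulr0 addr0.
rewrite addr0 big_split (sum_brB_vertex_edge (fun j => omegaW lam (inl j) (inr c))).
rewrite (sum_brB_vertex_edge (fun j => omegaW lam (inr b) (inl j))) /=.
by rewrite omegaW_vertex_edge omegaW_edge_vertex mulrN.
Qed.

Lemma invariant_omegaW_edge_sign :
  invariant2 (omegaW lam) -> forall f b c,
  edge_sign f b * lam (edge_other f b) c = edge_sign f c * lam (edge_other f c) b.
Proof.
move=> inv f b c; apply/eqP; rewrite -subr_eq0 -ad2_omegaW_edges.
by rewrite (inv (delta K (inl f))).
Qed.

End InvariantComponents.

Section VanishingCoefficients.
Variables (K : fieldType) (n : nat) (adj : rel 'I_n).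
Variable lam : 'I_n -> edgeT adj -> K.
Hypothesis lam_inv : forall f b c,
  edge_sign f b * lam (edge_other f b) c = edge_sign f c * lam (edge_other f c) b.

Lemma lam_eq0_neighbour_off_edge e f (a b : edgeT adj) :
  joins b e f -> f \notin endpoints a -> lam e a = 0.
Proof.
rewrite joinsC => b_fe f_off.
have := lam_inv f b a; rewrite (edge_other_joins b_fe) (edge_sign_notin K f_off) mul0r.
by move/eqP; rewrite mulf_eq0 (negbTE (edge_sign_joins_neq0 K b_fe)) => /eqP.
Qed.

Lemma lam_eq0_triangle e u v (a b1 b2 : edgeT adj) : 2%:R != 0 :> K ->
  joins a u v -> joins b1 e u -> joins b2 e v -> lam e a = 0.
Proof.
move=> two_neq0 a_uv b1_eu b2_ev.
have a_vu : joins a v u by rewrite joinsC.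
have b1_ue : joins b1 u e by rewrite joinsC.
have b2_ve : joins b2 v e by rewrite joinsC.
have := lam_inv u b1 a; have := lam_inv v b2 a; have := lam_inv e b1 b2.
rewrite !(edge_other_joins a_uv, edge_other_joins a_vu, edge_other_joins b1_eu,
  edge_other_joins b1_ue, edge_other_joins b2_ev, edge_other_joins b2_ve).
rewrite (edge_sign_joinsC K b1_eu) (edge_sign_joinsC K b2_ev) (edge_sign_joinsC K a_uv).
set s1 := edge_sign e b1; set s2 := edge_sign e b2; set t := edge_sign u a.
move=> eq_e eq_v eq_u.
have s1_neq0 : s1 != 0 := edge_sign_joins_neq0 K b1_eu.
have s2_neq0 : s2 != 0 := edge_sign_joins_neq0 K b2_ev.
have t_neq0 : t != 0 := edge_sign_joins_neq0 K a_uv.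
have : 2%:R * (s1 * s2 * t) * lam e a = 0.
  transitivity (- (s2 * t) * (- s1 * lam e a) - s1 * t * (- s2 * lam e a)); first by ring.
  rewrite eq_u eq_v.
  transitivity (t ^+ 2 * (s1 * lam u b2 - s2 * lam v b1)); first by ring.
  by rewrite eq_e subrr mulr0.
by move/eqP; rewrite !mulf_eq0 (negbTE two_neq0) (negbTE s1_neq0) (negbTE s2_neq0)
  (negbTE t_neq0) => /eqP.
Qed.

End VanishingCoefficients.

Theorem mainTheorem9 (K : fieldType) (hK : [pchar K] =i pred0)
  (n : nat) (adj : rel 'I_n)
  (hG : simple_graph adj) (hiso : no_isolated adj)
  (lam : 'I_n -> edgeT adj -> K) :
  invariant2 (omegaW lam) ->
  forall (e : 'I_n) (a : edgeT adj), (2 <= degree adj e)%N -> lam e a = 0.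
Proof.
move=> inv e a deg_e; have lam_inv := invariant_omegaW_edge_sign inv.
have [nbr_sub | /subsetPn [f]] := boolP ([set j | adj e j] \subset endpoints a);
  last first.
  rewrite inE => ef f_off; have [b b_ef] := simple_graph_joins hG ef.
  exact: (lam_eq0_neighbour_off_edge lam_inv b_ef f_off).
have nbr_eq : [set j | adj e j] = endpoints a.
  apply/eqP; rewrite eqEcard nbr_sub (leq_trans _ deg_e) // cards2.
  by case: (_ != _).
have adj_ends j : j \in endpoints a -> adj e j by rewrite -nbr_eq inE.
have [b1 b1_eu] := simple_graph_joins hG (adj_ends _ (set21 _ _)).
have [b2 b2_ev] := simple_graph_joins hG (adj_ends _ (set22 _ _)).
apply: (lam_eq0_triangle lam_inv _ (joins_ends a) b1_eu b2_ev).
by rewrite ((pcharf0P K).1 hK 2).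
Qed.
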